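(* Let $\rho\in\mathcal C$. For every $n\ge1$ let $\pi_n$ be a random permutation in $S_n$ with law $\mathbb P_n$ such that for every positive integer $l$, \[ \lim_{n\to\infty}\sup_{\mathbf p,\mathbf q\in\mathcal S(n,l)}\left|\frac{n^l\,\mathbb P_n(\pi_n(\mathbf p)=\mathbf q)}{\prod_{a=1}^l\rho\left(\frac{p_a}{n},\frac{q_a}{n}\right)}-1\right|=0. \] Let $\sigma_n\in S_n$ be deterministic permutations such that $\nu_{\sigma_n}$ converges weakly to a probability measure $\mu$ on $[0,1]^2$. Let $N_n(\pi_n,\sigma_n)=\sum_{i=1}^n 1\{\pi_n(i)=\sigma_n(i)\}$ and $\mu[\rho]=\int_{[0,1]^2}\rho\,d\mu$. Then for every $k\in\mathbb N$, $\lim_{n\to\infty}\mathbb E\,N_n(\pi_n,\sigma_n)^k=\mathbb E\,\mathrm{Poi}(\mu[\rho])^k$, where $\mathrm{Poi}(\lambda)$ denotes a Poisson random variable with mean $\lambda$. In particular $N_n(\pi_n,\sigma_n)$ converges in distribution to $\mathrm{Poi}(\mu[\rho])$.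
   Context: $[n]=\{1,\dots,n\}$. $\mathcal S(n,l)=\{\mathbf p=(p_1,\dots,p_l)\in[n]^l: p_a\ne p_b \text{ for } a\ne b\}$; for a permutation $\pi_n$, $\pi_n(\mathbf p)=(\pi_n(p_1),\dots,\pi_n(p_l))$. For $\sigma\in S_n$, $\nu_{\sigma}=\frac1n\sum_{i=1}^n\delta_{(i/n,\sigma(i)/n)}$. $\mathcal C$ is the set of strictly positive continuous functions $\rho$ on $[0,1]^2$ with $\int_0^1\rho(x,y)\,dx=\int_0^1\rho(x,y)\,dy=1$ for all $x,y$. *)

From HB Require Import structures.
From mathcomp Require Import all_boot all_order all_algebra all_fingroup.
From mathcomp Require Import all_classical all_reals all_analysis.
Set Implicit Arguments. Unset Strict Implicit. Unset Printing Implicit Defensive.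
Import Order.TTheory GRing.Theory Num.Theory.
Import numFieldNormedType.Exports.
Local Open Scope classical_set_scope.
Local Open Scope ring_scope.

Section Defs.
Context {R : realType}.

Definition sq01 : set (R * R) := `[0, 1] `*` `[0, 1].

Definition classC (rho : R * R -> R) : Prop :=
  {within sq01, continuous rho} /\
  (forall z, sq01 z -> 0 < rho z) /\
  (forall y, y \in `[0, 1] ->
     (\int[lebesgue_measure]_(x in `[0%R, 1%R]) (rho (x, y))%:E = 1)%E) /\
  (forall x, x \in `[0, 1] ->
     (\int[lebesgue_measure]_(y in `[0%R, 1%R]) (rho (x, y))%:E = 1)%E).

(* A law on S_m is a nonnegative function on 'S_m summing to 1.
   Elements of [m] = {1..m} are represented by i : 'I_m standing for i+1. *)
Definition is_law m (P : {ffun 'S_m -> R}) : Prop :=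
  (forall s, 0 <= P s) /\ \sum_(s : 'S_m) P s = 1.

Definition prob_map m l (P : {ffun 'S_m -> R}) (p q : 'I_l -> 'I_m) : R :=
  \sum_(s : 'S_m | [forall a, s (p a) == q a]) P s.

Definition grid_pt m (i j : 'I_m) : R * R :=
  ((i.+1)%:R / m%:R, (j.+1)%:R / m%:R).

Definition ncoinc m (s t : 'S_m) : nat := \sum_(i : 'I_m) (s i == t i).

Definition moment m (P : {ffun 'S_m -> R}) (t : 'S_m) (k : nat) : R :=
  \sum_(s : 'S_m) P s * ((ncoinc s t)%:R ^+ k).

Definition prob_ncoinc m (P : {ffun 'S_m -> R}) (t : 'S_m) (j : nat) : R :=
  \sum_(s : 'S_m | ncoinc s t == j) P s.

Definition poisson_moment (lam : R) (k : nat) : \bar R :=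
  (\sum_(j <oo) (poisson_pmf lam j * (j%:R ^+ k))%:E)%E.

End Defs.

From HB Require Import structures.
From mathcomp Require Import all_boot all_order all_algebra all_fingroup.
From mathcomp Require Import all_classical all_reals all_analysis.
From mathcomp Require Import zify ring lra.
Import Order.TTheory GRing.Theory Num.Theory.
Import numFieldNormedType.Exports.

(* The r-th falling factorial of N(pi, sigma) counts the injective r-tuples of
   coincidences, so E (N)_r is the sum over injective p of P(pi(p) = sigma(p)).
   By hypothesis each term is n^-r prod_a rho(p_a/n, sigma(p_a)/n) up to a
   uniformly small relative error, and since the non-injective tuples make up
   only O(1/n) of all n^r tuples, E (N)_r is asymptotically
   (n^-1 sum_i rho(i/n, sigma(i)/n))^r, which tends to mu[rho]^r: the r-th
   factorial moment of Poi(mu[rho]).  Moments are fixed linear combinations of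
   factorial moments, and P(N = j) is squeezed between the expectations of the
   Bonferroni truncations of inclusion-exclusion, which are again linear
   combinations of factorial moments. *)


Lemma ncoinc_card m (s t : 'S_m) : ncoinc s t = #|[pred i | s i == t i]|.
Proof.
rewrite /ncoinc -sum1_card [RHS]big_mkcond /=.
by apply: eq_bigr => i _; rewrite inE; case: (_ == _).
Qed.

Lemma ffact_ncoinc m r (s t : 'S_m) :
  (ncoinc s t) ^_ r =
  #|[set p : {ffun 'I_r -> 'I_m} | injectiveb p && [forall a, s (p a) == t (p a)]]|.
Proof.
rewrite ncoinc_card.
have := card_inj_ffuns_on 'I_r [pred i | s i == t i]; rewrite card_ord => <-.
by apply: eq_card => p; rewrite !inE andbC.
Qed.

Lemma ffactnD n a b : n ^_ (a + b) = n ^_ a * (n - a) ^_ b.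
Proof.
elim: b => [|b IH]; first by rewrite addn0 ffactn0 muln1.
by rewrite addnS !ffactnSr IH subnDA mulnA.
Qed.

Lemma ffactSr_add n r : n * n ^_ r = n ^_ r.+1 + r * n ^_ r.
Proof.
rewrite ffactnSr; case: (leqP r n) => [le_rn | lt_nr]; first nia.
by rewrite ffact_small // !muln0.
Qed.

Lemma ffact_le_expn m r : m ^_ r <= m ^ r.
Proof.
elim: r => [|r IH]; first by rewrite ffactn0 expn0.
by rewrite ffactnSr expnSr leq_mul // leq_subr.
Qed.

Lemma expn_ffact_gap m r : (m ^ r - m ^_ r) * m <= r * r * m ^ r.
Proof.
elim: r => [|r IH]; first by rewrite expn0 ffactn0 subnn.
have := ffact_le_expn m r.
rewrite ffactnSr expnSr; move: IH.
set F := m ^_ r; set X := m ^ r => IH FX.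
have split_gap : X * m - F * (m - r) <= (X - F) * m + F * r by nia.
apply: (leq_trans (leq_mul split_gap (leqnn m))).
have : F * r * m <= X * r * m by rewrite !leq_mul2r FX ?orbT.
nia.
Qed.

Lemma card_noninjective_ffun m r :
  #|[pred p : {ffun 'I_r -> 'I_m} | ~~ injectiveb p]| * m <= r * r * m ^ r.
Proof.
have := cardC [pred p : {ffun 'I_r -> 'I_m} | injectiveb p].
rewrite card_ffun !card_ord.
have -> : #|[pred p : {ffun 'I_r -> 'I_m} | injectiveb p]| = m ^_ r.
  rewrite -[m in (m ^_ _)]card_ord -[r in (_ ^_ r)]card_ord -card_inj_ffuns.
  by apply: eq_card => p; rewrite !inE.
move=> card_split.
have -> : #|[pred p : {ffun 'I_r -> 'I_m} | ~~ injectiveb p]| = m ^ r - m ^_ r.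
  by rewrite -card_split addKn; apply: eq_card => p; rewrite !inE.
exact: expn_ffact_gap.
Qed.

Local Open Scope classical_set_scope.
Local Open Scope ring_scope.

Lemma expr_ffact_comb (R : comPzRingType) k : exists c : nat -> R,
  forall x : nat, x%:R ^+ k = \sum_(r < k.+1) c r * (x ^_ r)%:R.
Proof.
elim: k => [|k [c Hc]].
  by exists (fun=> 1) => x; rewrite big_ord1 ffactn0 expr0 mul1r.
exists (fun r => (if r is r'.+1 then c r' else 0) + (if (r < k.+1)%N then r%:R * c r else 0)).
move=> x; rewrite exprS Hc big_distrr /=.
under [RHS]eq_bigr => r _ do rewrite mulrDl.
rewrite [RHS]big_split /= [X in _ = X + _]big_ord_recl [X in _ = _ + X]big_ord_recr /=.
rewrite ltnn !mul0r add0r addr0 -big_split /=; apply: eq_bigr => r _.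
by rewrite /bump /= add0n add1n ltn_ord mulrCA -natrM ffactSr_add natrD natrM; ring.
Qed.

Lemma alt_sum_binS (R : pzRingType) M T :
  \sum_(i < T.+1) (-1) ^+ i * ('C(M.+1, i))%:R = (-1) ^+ T * ('C(M, T))%:R :> R.
Proof.
elim: T => [|T IH]; first by rewrite big_ord1 !expr0 !bin0.
by rewrite big_ord_recr /= IH binS natrD exprS !mulN1r mulrDr !mulNr addrCA addrN addr0.
Qed.

Section Bonferroni.
Variable R : numDomainType.

(* Truncation at [i = T] of the inclusion-exclusion identity
   [(N == j) = \sum_i (-1)^i 'C(N, j) 'C(N - j, i)]. *)
Definition bonferroni (j T N : nat) : R :=
  \sum_(i < T.+1) (-1) ^+ i * ('C(N, j) * 'C(N - j, i))%:R.

Lemma bonferroniE j T N : bonferroni j T N =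
  if (N < j)%N then 0 else if N == j then 1
  else ('C(N, j))%:R * ((-1) ^+ T * ('C((N - j).-1, T))%:R).
Proof.
rewrite /bonferroni; case: (ltnP N j) => [lt_Nj | le_jN].
  by rewrite big1 // => i _; rewrite bin_small // mul0n mulr0.
case: eqP => [->|/eqP neq_Nj].
  rewrite subnn big_ord_recl /= big1 ?expr0 ?bin0 ?binn ?mul1r ?addr0 //.
  by move=> i _; rewrite bin0n /= muln0 mulr0.
have -> : (N - j = (N - j).-1.+1)%N by rewrite prednK // subn_gt0 ltn_neqAle eq_sym neq_Nj.
rewrite -alt_sum_binS big_distrr /=; apply: eq_bigr => i _.
by rewrite natrM mulrCA.
Qed.

Lemma bonferroni_even_ge j L N : ((N == j)%:R : R) <= bonferroni j L.*2 N.
Proof.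
rewrite bonferroniE; case: (ltnP N j) => [lt_Nj | _]; first by rewrite ltn_eqF.
case: eqP => // _; rewrite -signr_odd odd_double expr0 mul1r.
by rewrite -natrM ler0n.
Qed.

Lemma bonferroni_odd_le j L N : bonferroni j L.*2.+1 N <= ((N == j)%:R : R).
Proof.
rewrite bonferroniE; case: (ltnP N j) => [lt_Nj | _]; first by rewrite ltn_eqF.
case: eqP => // _; rewrite -signr_odd /= odd_double expr1 mulN1r mulrN -natrM.
by rewrite oppr_le0 ler0n.
Qed.

End Bonferroni.

Lemma natr_bin_binE (R : numFieldType) N j i :
  (('C(N, j) * 'C(N - j, i))%:R : R) = (N ^_ (j + i))%:R / (j`! * i`!)%:R.
Proof.
have -> : (N ^_ (j + i) = 'C(N, j) * 'C(N - j, i) * (j`! * i`!))%N.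
  by rewrite ffactnD -!bin_ffact mulnACA.
by rewrite (natrM _ (_ * _)) mulfK // pnatr_eq0 muln_eq0 negb_or -!lt0n !fact_gt0.
Qed.

Section Poisson.
Context {R : realType}.
(* For a non-positive rate [poisson_pmf] is the junk value [1]. *)
Context {lam : R} (lam_gt0 : 0 < lam).

Lemma poisson_ffact_series r :
  series (fun j => poisson_pmf lam j * (j ^_ r)%:R) @ \oo --> lam ^+ r.
Proof.
rewrite -(cvg_shiftn r).
have -> : (fun n => series (fun j => poisson_pmf lam j * (j ^_ r)%:R) (n + r)%N) =
    (fun n => expR (- lam) * lam ^+ r * series (exp_coeff lam) n).
  apply/funext => n; rewrite /series /= (@big_cat_nat _ _ _ r) ?leq_addl //=.
  rewrite [X in X + _]big_nat big1 ?add0r; last first.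
    by move=> i /andP[_ lt_ir]; rewrite ffact_small // mulr0.
  rewrite -{1}(add0n r) big_addn addnK big_distrr /=; apply: eq_bigr => i _.
  have := ffact_fact (leq_addl i r); rewrite addnK => fact_split.
  have ffact_neq0 : ((i + r) ^_ r)%:R != 0 :> R.
    by rewrite pnatr_eq0 -lt0n ffact_gt0 leq_addl.
  have fact_neq0 : (i`!)%:R != 0 :> R by rewrite pnatr_eq0 -lt0n fact_gt0.
  rewrite /poisson_pmf lam_gt0 /exp_coeff /= -fact_split natrM exprD.
  by field; rewrite ffact_neq0 fact_neq0.
have expR_cancel : expR (- lam) * lam ^+ r * expR lam = lam ^+ r.
  by rewrite mulrAC -expRD addNr expR0 mul1r.
have lim : (fun n => expR (- lam) * lam ^+ r * series (exp_coeff lam) n) @ \oo -->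
    expR (- lam) * lam ^+ r * expR lam.
  exact: cvgM (cvg_cst _) (is_cvg_series_exp_coeff lam).
by rewrite expR_cancel in lim.
Qed.

Lemma poisson_momentE {k} {c : nat -> R} :
  (forall x : nat, x%:R ^+ k = \sum_(r < k.+1) c r * (x ^_ r)%:R) ->
  poisson_moment lam k = (\sum_(r < k.+1) c r * lam ^+ r)%:E.
Proof.
move=> expr_comb.
have series_comb : series (fun j => poisson_pmf lam j * j%:R ^+ k) = (fun n =>
    \sum_(r < k.+1) c r * series (fun j => poisson_pmf lam j * (j ^_ r)%:R) n).
  apply/funext => n; rewrite /series /=.
  under eq_bigr do rewrite expr_comb big_distrr /=.
  rewrite exchange_big /=; apply: eq_bigr => r _; rewrite big_distrr /=.
  by apply: eq_bigr => j _; rewrite mulrCA.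
have series_cvg : series (fun j => poisson_pmf lam j * j%:R ^+ k) @ \oo -->
    \sum_(r < k.+1) c r * lam ^+ r.
  rewrite series_comb; apply: cvg_big => //; first exact: add_continuous.
  by move=> r _; exact: cvgM (cvg_cst _) (poisson_ffact_series r).
apply: cvg_lim => //; under eq_fun do rewrite sumEFin.
by apply: cvg_EFin; [exact: nearW | exact: series_cvg].
Qed.

Lemma cvg_bonferroni_poisson j :
  (\sum_(i < T.+1) (-1) ^+ i / (j`! * i`!)%:R * lam ^+ (j + i)) @[T --> \oo] -->
  poisson_pmf lam j.
Proof.
have -> : (fun T => \sum_(i < T.+1) (-1) ^+ i / (j`! * i`!)%:R * lam ^+ (j + i)) =
    (fun T => lam ^+ j / j`!%:R * series (exp_coeff (- lam)) T.+1).
  apply/funext => T; rewrite /series /= big_mkord big_distrr /=.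
  apply: eq_bigr => i _; rewrite /exp_coeff /= [(- lam) ^+ _]exprNn exprD natrM.
  have fact_neq0 n : (n`!)%:R != 0 :> R by rewrite pnatr_eq0 -lt0n fact_gt0.
  by field; rewrite !fact_neq0.
rewrite /poisson_pmf lam_gt0; apply: cvgM (cvg_cst _) _.
have := is_cvg_series_exp_coeff (- lam); rewrite -(cvg_shiftn 1) /=.
by under eq_fun do rewrite addn1.
Qed.

End Poisson.

Definition fact_moment {R : realType} {m} (P : {ffun 'S_m -> R}) (t : 'S_m) r : R :=
  \sum_(s : 'S_m) P s * ((ncoinc s t) ^_ r)%:R.

Section FactorialMoments.
Context {R : realType} {m : nat}.
Variables (P : {ffun 'S_m -> R}) (t : 'S_m).

Lemma fact_momentE r : fact_moment P t r =
  \sum_(p : {ffun 'I_r -> 'I_m} | injectiveb p) prob_map P p (fun a => t (p a)).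
Proof.
have term_split s : P s * ((ncoinc s t) ^_ r)%:R =
    \sum_(p : {ffun 'I_r -> 'I_m} | injectiveb p)
      (if [forall a, s (p a) == t (p a)] then P s else 0).
  rewrite ffact_ncoinc -sum1_card natr_sum big_distrr /= big_mkcond [RHS]big_mkcond /=.
  apply: eq_bigr => p _; rewrite inE.
  by case: (injectiveb p); case: [forall a, _] => //=; rewrite mulr1.
rewrite /fact_moment (eq_bigr _ (fun s _ => term_split s)) exchange_big /=.
by apply: eq_bigr => p _; rewrite /prob_map [RHS]big_mkcond.
Qed.

Lemma moment_fact_moment {k} {c : nat -> R} :
  (forall x : nat, x%:R ^+ k = \sum_(r < k.+1) c r * (x ^_ r)%:R) ->
  moment P t k = \sum_(r < k.+1) c r * fact_moment P t r.
Proof.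
move=> expr_comb; rewrite /moment /fact_moment.
under eq_bigr do rewrite expr_comb big_distrr /=.
rewrite exchange_big /=; apply: eq_bigr => r _; rewrite big_distrr /=.
by apply: eq_bigr => s _; rewrite mulrCA.
Qed.

Lemma bonferroni_fact_moment j T :
  \sum_(s : 'S_m) P s * bonferroni R j T (ncoinc s t) =
  \sum_(i < T.+1) (-1) ^+ i / (j`! * i`!)%:R * fact_moment P t (j + i).
Proof.
rewrite /bonferroni /fact_moment; under eq_bigr do rewrite big_distrr /=.
rewrite exchange_big /=; apply: eq_bigr => i _; rewrite big_distrr /=.
by apply: eq_bigr => s _; rewrite natr_bin_binE; ring.
Qed.

Lemma prob_ncoinc_bonferroni j L : is_law P ->
  \sum_(s : 'S_m) P s * bonferroni R j L.*2.+1 (ncoinc s t) <= prob_ncoinc P t j <=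
  \sum_(s : 'S_m) P s * bonferroni R j L.*2 (ncoinc s t).
Proof.
move=> [P_ge0 _].
have -> : prob_ncoinc P t j = \sum_(s : 'S_m) P s * ((ncoinc s t == j)%:R).
  rewrite /prob_ncoinc big_mkcond /=; apply: eq_bigr => s _.
  by case: (_ == _); rewrite ?mulr1 ?mulr0.
apply/andP; split; apply: ler_sum => s _; rewrite ler_wpM2l //.
  exact: bonferroni_odd_le.
exact: bonferroni_even_ge.
Qed.

End FactorialMoments.

Lemma dist_le_rel (R : numFieldType) (a w e : R) :
  0 < w -> `|a / w - 1| <= e -> `|a - w| <= e * w.
Proof.
move=> w_gt0 rel_le; have -> : a - w = w * (a / w - 1) by field; rewrite gt_eqF.
by rewrite normrM gtr0_norm // mulrC ler_wpM2r // ltW.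
Qed.

Lemma sq01_compact {R : realType} : compact (sq01 : set (R * R)).
Proof. by apply: compact_setX; exact: segment_compact. Qed.

Lemma sq01_neq0 {R : realType} : (sq01 : set (R * R)) !=set0.
Proof. by exists (0, 0); split; rewrite /= in_itv /= lexx ler01. Qed.

Lemma grid_pt_sq01 {R : realType} m (i j : 'I_m) : (sq01 : set (R * R)) (grid_pt i j).
Proof.
have grid_coord (k : 'I_m) : (k.+1%:R / m%:R : R) \in `[0, 1].
  have m_gt0 : (0 < m%:R :> R) by rewrite ltr0n (leq_ltn_trans _ (ltn_ord k)).
  rewrite in_itv /= divr_ge0 ?ler0n //= ler_pdivrMr // mul1r ler_nat.
  exact: ltn_ord.
by split; apply: grid_coord.
Qed.

Section PositiveContinuousOnSquare.
Context {R : realType}.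
Context {f : R * R -> R} (f_cont : {within sq01, continuous f})
  (f_gt0 : forall z, sq01 z -> 0 < f z).

Lemma sq01_ub_gt0 : exists M, 0 < M /\ forall z, sq01 z -> f z <= M.
Proof.
have [c /set_mem c_sq f_max] := compact_EVT_max sq01_neq0 sq01_compact f_cont.
by exists (f c); split => [|z /mem_set]; [exact: f_gt0 c_sq | exact: f_max].
Qed.

Lemma sq01_lb_gt0 : exists d, 0 < d /\ forall z, sq01 z -> d <= f z.
Proof.
have [c /set_mem c_sq f_min] := compact_EVT_min sq01_neq0 sq01_compact f_cont.
by exists (f c); split => [|z /mem_set]; [exact: f_gt0 c_sq | exact: f_min].
Qed.

End PositiveContinuousOnSquare.

Section Coincidences.
Context {R : realType}.
Context {rho : R * R -> R} {P : forall n : nat, {ffun 'S_n.+1 -> R}}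
  {sigma : forall n : nat, 'S_n.+1} {lam : R}.
Hypothesis rho_cont : {within sq01, continuous rho}.
Hypothesis rho_gt0 : forall z, sq01 z -> 0 < rho z.
Hypothesis P_law : forall n, is_law (P n).
Hypothesis P_ratio : forall l : nat, (0 < l)%N -> forall eps : R, 0 < eps ->
  \forall n \near \oo,
    forall p q : 'I_l -> 'I_n.+1, injective p -> injective q ->
      `| (n.+1%:R) ^+ l * prob_map (P n) p q
           / \prod_(a < l) rho (grid_pt (p a) (q a)) - 1 | <= eps.
Hypothesis avg_cvg :
  (fun n => n.+1%:R^-1 * \sum_(i < n.+1) rho (grid_pt i (sigma n i))) @ \oo --> lam.

Let weight n (i : 'I_n.+1) := rho (grid_pt i (sigma n i)).
Let tuple_weight {n r} (p : {ffun 'I_r -> 'I_n.+1}) := \prod_(a < r) weight n (p a).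
Let inj_mass n r := n.+1%:R ^- r *
  \sum_(p : {ffun 'I_r -> 'I_n.+1} | injectiveb p) tuple_weight p.
Let noninj_mass n r := n.+1%:R ^- r *
  \sum_(p : {ffun 'I_r -> 'I_n.+1} | ~~ injectiveb p) tuple_weight p.

Let weight_gt0 n i : 0 < weight n i.
Proof. exact/rho_gt0/grid_pt_sq01. Qed.

Let tuple_weight_gt0 n r p : 0 < @tuple_weight n r p.
Proof. by apply: prodr_gt0 => a _; exact: weight_gt0. Qed.

Lemma lam_gt0 : 0 < lam.
Proof.
have [d [d_gt0 d_lb]] := sq01_lb_gt0 rho_cont rho_gt0.
apply: (lt_le_trans d_gt0); apply: (cvgr_to_ge avg_cvg); near=> n.
have n_gt0 : 0 < n.+1%:R :> R by rewrite ltr0n.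
rewrite ler_pdivlMl // mulr_natl -[n.+1 in X in X <= _]card_ord -sumr_const.
by apply: ler_sum => i _; exact/d_lb/grid_pt_sq01.
Unshelve. all: by end_near. Qed.

Lemma avg_weight_expr n r :
  (n.+1%:R^-1 * \sum_(i < n.+1) weight n i) ^+ r = inj_mass n r + noninj_mass n r.
Proof.
rewrite exprMn exprVn /inj_mass /noninj_mass -mulrDr; congr (_ * _).
rewrite -[r in _ ^+ r]card_ord -prodr_const bigA_distr_bigA.
by rewrite (bigID (fun p : {ffun 'I_r -> 'I_n.+1} => injectiveb p)).
Qed.

Section Bounded.
Variable M : R.
Hypothesis M_gt0 : 0 < M.
Hypothesis rho_ub : forall z, sq01 z -> rho z <= M.

Let tuple_weight_le n r p : @tuple_weight n r p <= M ^+ r.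
Proof.
rewrite /tuple_weight -[r in M ^+ r]card_ord -prodr_const.
by apply: ler_prod => a _; rewrite ltW ?weight_gt0 //; exact/rho_ub/grid_pt_sq01.
Qed.

Lemma noninj_mass_le n r : noninj_mass n r <= (r * r)%:R * M ^+ r / n.+1%:R.
Proof.
have n_gt0 : 0 < n.+1%:R :> R by rewrite ltr0n.
pose c : R := (#|[pred p : {ffun 'I_r -> 'I_n.+1} | ~~ injectiveb p]|)%:R.
have sum_le : \sum_(p : {ffun 'I_r -> 'I_n.+1} | ~~ injectiveb p) tuple_weight p <=
    c * M ^+ r.
  by rewrite mulr_natl -sumr_const; apply: ler_sum => p _; exact: tuple_weight_le.
have card_le : c * n.+1%:R <= (r * r)%:R * n.+1%:R ^+ r.
  by rewrite -natrX -!natrM ler_nat card_noninjective_ffun.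
apply: (le_trans (ler_wpM2l _ sum_le)); first by rewrite invr_ge0 exprn_ge0 // ltW.
rewrite mulrA [X in _ <= X]mulrAC ler_pM2r ?exprn_gt0 // mulrC.
by rewrite ler_pdivlMr // mulrAC ler_pdivrMr ?exprn_gt0.
Qed.

End Bounded.

Lemma noninj_mass_cvg0 r : noninj_mass n r @[n --> \oo] --> 0.
Proof.
have [M [M_gt0 rho_ub]] := sq01_ub_gt0 rho_cont rho_gt0.
apply: (@squeeze_cvgr _ _ _ _ (fun=> 0) (fun n => (r * r)%:R * M ^+ r / n.+1%:R)).
- near=> n; rewrite noninj_mass_le // andbT.
  rewrite mulr_ge0 ?invr_ge0 ?exprn_ge0 ?ler0n //.
  by apply: sumr_ge0 => p _; exact/ltW/tuple_weight_gt0.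
- exact: cvg_cst.
- by rewrite -(mulr0 ((r * r)%:R * M ^+ r)); exact: cvgM (cvg_cst _) cvg_harmonic.
Unshelve. all: by end_near. Qed.

Lemma inj_mass_cvg r : inj_mass n r @[n --> \oo] --> lam ^+ r.
Proof.
have -> : inj_mass = fun n r =>
    (n.+1%:R^-1 * \sum_(i < n.+1) weight n i) ^+ r - noninj_mass n r.
  by apply/funext => n; apply/funext => r'; rewrite avg_weight_expr addrK.
rewrite -[lam ^+ r]subr0; apply: cvgB; last exact: noninj_mass_cvg0.
exact: (continuous_cvg _ (@exprn_continuous R r lam) avg_cvg).
Qed.

Lemma fact_moment_rel_err r : (0 < r)%N -> forall eps, 0 < eps ->
  \forall n \near \oo,
    `|fact_moment (P n) (sigma n) r - inj_mass n r| <= eps * inj_mass n r.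
Proof.
move=> r_gt0 eps eps_gt0; move: (P_ratio _ r_gt0 _ eps_gt0); apply: filterS => n ratio_le.
rewrite fact_momentE /inj_mass big_distrr /= -sumrB.
apply: (le_trans (ler_norm_sum _ _ _)); rewrite big_distrr /=.
apply: ler_sum => p /injectiveP p_inj.
have sp_inj : injective (fun a => sigma n (p a)) by move=> a b /perm_inj /p_inj.
apply: dist_le_rel; first by rewrite mulr_gt0 ?invr_gt0 ?exprn_gt0 ?ltr0n ?tuple_weight_gt0.
by rewrite invfM invrK mulrA [_ * n.+1%:R ^+ r]mulrC; exact: ratio_le.
Qed.

Lemma fact_moment_cvg r : fact_moment (P n) (sigma n) r @[n --> \oo] --> lam ^+ r.
Proof.
case: r => [|r].
  have -> : (fun n => fact_moment (P n) (sigma n) 0) = fun=> 1.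
    apply/funext => n; rewrite /fact_moment.
    by under eq_bigr do rewrite ffactn0 mulr1; exact: (P_law n).2.
  by rewrite expr0; exact: cvg_cst.
have inj_cvg := inj_mass_cvg r.+1.
pose B := lam ^+ r.+1 + 1.
have B_gt0 : 0 < B by rewrite ltr_wpDl // exprn_ge0 // ltW // lam_gt0.
have err_cvg0 : (fun n => fact_moment (P n) (sigma n) r.+1 - inj_mass n r.+1) @ \oo --> 0.
  apply/cvgrPdist_le => eps eps_gt0; near=> n; rewrite sub0r normrN.
  apply: (le_trans (_ : _ <= eps / B * inj_mass n r.+1)).
    by near: n; apply: fact_moment_rel_err; rewrite ?divr_gt0.
  rewrite mulrAC ler_pdivrMr // ler_wpM2l ?(ltW eps_gt0) //.
  by near: n; apply: (cvgr_le _ inj_cvg); rewrite ltrDl ltr01.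
have -> : (fun n => fact_moment (P n) (sigma n) r.+1) =
    (fun n => (fact_moment (P n) (sigma n) r.+1 - inj_mass n r.+1) + inj_mass n r.+1).
  by apply/funext => n; rewrite subrK.
by rewrite -[lam ^+ r.+1]add0r; exact: cvgD.
Unshelve. all: by end_near. Qed.

Lemma moment_cvg k :
  (fun n => (moment (P n) (sigma n) k)%:E) @ \oo --> poisson_moment lam k.
Proof.
have [c expr_comb] := expr_ffact_comb R k.
rewrite (poisson_momentE lam_gt0 expr_comb); apply: cvg_EFin; first exact: nearW.
under eq_fun do rewrite (moment_fact_moment _ _ expr_comb).
apply: cvg_big => //; first exact: add_continuous.
by move=> r _; exact: cvgM (cvg_cst _) (fact_moment_cvg r).
Qed.

Lemma bonferroni_expectation_cvg j T :
  (\sum_(s : 'S_n.+1) P n s * bonferroni R j T (ncoinc s (sigma n))) @[n --> \oo] -->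
  \sum_(i < T.+1) (-1) ^+ i / (j`! * i`!)%:R * lam ^+ (j + i).
Proof.
under eq_fun do rewrite bonferroni_fact_moment.
apply: cvg_big => //; first exact: add_continuous.
by move=> i _; exact: cvgM (cvg_cst _) (fact_moment_cvg (j + i)).
Qed.

Lemma prob_ncoinc_cvg j :
  prob_ncoinc (P n) (sigma n) j @[n --> \oo] --> poisson_pmf lam j.
Proof.
apply/cvgrPdist_le => eps eps_gt0.
have eps2_gt0 : 0 < eps / 2 by rewrite divr_gt0.
have [T _ trunc_near] :=
  (cvgrPdist_le _ _).1 (cvg_bonferroni_poisson lam_gt0 j) _ eps2_gt0.
have T_le : (T <= T.*2)%N by rewrite -addnn leq_addr.
have even_near := trunc_near _ T_le; have odd_near := trunc_near _ (leqW T_le).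
have := bonferroni_expectation_cvg j T.*2; move/cvgrPdist_le/(_ _ eps2_gt0) => even_cvg.
have := bonferroni_expectation_cvg j T.*2.+1; move/cvgrPdist_le/(_ _ eps2_gt0) => odd_cvg.
apply: (@filterS2 _ _ _ _ _ _ _ even_cvg odd_cvg) => n even_close odd_close.
(* [P(N = j)] lies between the odd and even truncations, each [eps/2]-close to
   a partial sum that is itself [eps/2]-close to [poisson_pmf lam j]. *)
have /andP[lb ub] := prob_ncoinc_bonferroni (P n) (sigma n) j T (P_law n).
move: even_near odd_near even_close odd_close lb ub.
rewrite /= !ler_distl => /andP[? ?] /andP[? ?] /andP[? ?] /andP[? ?] ? ?.
apply/andP; split; lra.
Qed.

End Coincidences.

Theorem theorem1p3 (R : realType) (rho : R * R -> R)
  (P : forall n : nat, {ffun 'S_n.+1 -> R})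
  (sigma : forall n : nat, 'S_n.+1)
  (mu : probability (R * R)%type R) :
  classC rho ->
  (forall n, is_law (P n)) ->
  (forall l : nat, (0 < l)%N -> forall eps : R, 0 < eps ->
     \forall n \near \oo,
       forall p q : 'I_l -> 'I_n.+1, injective p -> injective q ->
         `| (n.+1%:R) ^+ l * prob_map (P n) p q
              / \prod_(a < l) rho (grid_pt (p a) (q a)) - 1 | <= eps) ->
  mu sq01 = 1%E ->
  (forall f : R * R -> R, {within sq01, continuous f} ->
     (fun n => n.+1%:R^-1 * \sum_(i < n.+1) f (grid_pt i (sigma n i)))
       @ \oo --> \int[mu]_(z in sq01) f z) ->
  let lam := \int[mu]_(z in sq01) rho z in
  (forall k : nat,
     (fun n => (moment (P n) (sigma n) k)%:E) @ \oo --> poisson_moment lam k)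
  /\
  (forall j : nat,
     (fun n => prob_ncoinc (P n) (sigma n) j) @ \oo --> poisson_pmf lam j).
Proof.
move=> [rho_cont [rho_gt0 _]] P_law P_ratio _ weak_cvg lam.
have avg_cvg := weak_cvg rho rho_cont.
split=> [k | j].
  exact: moment_cvg rho_cont rho_gt0 P_law P_ratio avg_cvg k.
exact: prob_ncoinc_cvg rho_cont rho_gt0 P_law P_ratio avg_cvg j.
Qed.
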